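(* Let $H\subseteq G$ be finite simple graphs ($H$ a subgraph of $G$). Then $\nu_*(H)\le\nu_*(G)$, and if moreover $V(H)=V(G)$, then $\nu^*(H)\le\nu^*(G)$.
   Context: For a finite simple graph $G=(V,E)$ with $\ell=|V|+|E|$, a construction sequence (c-sequence) is a bijection $x:\{1,\dots,\ell\}\to V\sqcup E$ such that every edge $e=uw$ satisfies $x^{-1}(e)>\max\{x^{-1}(u),x^{-1}(w)\}$. The cost of $x$ is $\nu(x)=\sum_{e=uw\in E}\big(2x^{-1}(e)-x^{-1}(u)-x^{-1}(w)\big)$; $\nu^*(G)$ and $\nu_*(G)$ are the maximum and minimum of $\nu(x)$ over all c-sequences for $G$. *)

From mathcomp Require Import all_boot.
Set Implicit Arguments. Unset Strict Implicit. Unset Printing Implicit Defensive.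

Record sgraph (T : finType) := SGraph { gV : {set T}; gE : {set {set T}} }.

Definition is_sgraph (T : finType) (G : sgraph T) : bool :=
  [forall e in gE G, (#|e| == 2) && (e \subset gV G)].

Definition subgraph (T : finType) (H G : sgraph T) : bool :=
  (gV H \subset gV G) && (gE H \subset gE G).

Definition elems (T : finType) (G : sgraph T) : seq (T + {set T}) :=
  [seq inl v | v <- enum (gV G)] ++ [seq inr e | e <- enum (gE G)].

(* A sequence s listing each element of V ⊔ E exactly once represents the
   bijection x : {1..l} -> V ⊔ E with x (i.+1) = nth s i; then
   x^{-1}(z) = pos s z. *)
Definition pos (T : finType) (s : seq (T + {set T})) (z : T + {set T}) : nat :=
  (index z s).+1.

Definition is_cseq (T : finType) (G : sgraph T) (s : seq (T + {set T})) : bool :=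
  perm_eq s (elems G) &&
  [forall e in gE G, [forall v in e, pos s (inl v) < pos s (inr e)]].

(* nu(x) = sum over edges e = uw of (2 x^{-1}(e) - x^{-1}(u) - x^{-1}(w));
   for a c-sequence every summand is positive, so nat subtraction is exact. *)
Definition cost (T : finType) (G : sgraph T) (s : seq (T + {set T})) : nat :=
  \sum_(e in gE G) (2 * pos s (inr e) - \sum_(v in e) pos s (inl v)).

Definition cseqs (T : finType) (G : sgraph T) : seq (seq (T + {set T})) :=
  [seq s <- permutations (elems G) | is_cseq G s].

Definition costs (T : finType) (G : sgraph T) : seq nat :=
  sort leq [seq cost G s | s <- cseqs G].

(* minimum / maximum cost over all c-sequences (the list is never empty) *)
Definition nu_min (T : finType) (G : sgraph T) : nat := head 0 (costs G).
Definition nu_max (T : finType) (G : sgraph T) : nat := last 0 (costs G).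

From mathcomp Require Import all_boot.
Set Implicit Arguments. Unset Strict Implicit. Unset Printing Implicit Defensive.

(* Deleting from a c-sequence of G everything outside H leaves a c-sequence of
   H in which every vertex-edge gap can only shrink, so nu_*(H) <= nu_*(G).
   When V(H) = V(G), appending the edges of G that are missing from H after a
   c-sequence of H gives a c-sequence of G that keeps the positions of H's
   elements; the new edges only add to the cost, so nu^*(H) <= nu^*(G). *)

Section FilterIndex.
Variables (X : eqType) (P : pred X).
Implicit Types (s : seq X) (x y : X).

Lemma index_filter s x : P x -> index x (filter P s) = count P (take (index x s) s).
Proof.
move=> Px; elim: s => //= a s IH.
have [->|neq_ax] := eqVneq a x; first by rewrite Px /= eqxx.
by case Pa: (P a); rewrite /= ?(negbTE neq_ax) IH ?Pa.
Qed.

Lemma count_takeD s i j :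
  count P (take (i + j) s) = count P (take i s) + count P (take j (drop i s)).
Proof. by rewrite takeD count_cat. Qed.

Lemma index_filter_le s x y : P x -> P y -> index x s <= index y s ->
  index x (filter P s) <= index y (filter P s).
Proof.
move=> Px Py /subnKC le_xy; rewrite !index_filter // -le_xy count_takeD.
exact: leq_addr.
Qed.

Lemma index_filter_lt s x y : P x -> P y -> x \in s -> index x s < index y s ->
  index x (filter P s) < index y (filter P s).
Proof.
move=> Px Py xs lt_xy; rewrite !index_filter // -(subnKC (ltnW lt_xy)).
rewrite count_takeD -[X in X < _]addn0 ltn_add2l.
rewrite -(prednK (_ : 0 < index y s - index x s)) ?subn_gt0 //.
by rewrite (drop_nth x) ?index_mem // nth_index //= Px.
Qed.

Lemma index_filter_gap s x y : P x -> P y -> index x s <= index y s ->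
  index y (filter P s) - index x (filter P s) <= index y s - index x s.
Proof.
move=> Px Py /subnKC le_xy; rewrite !index_filter // -{1}le_xy count_takeD addKn.
by apply: leq_trans (count_size _ _) _; rewrite size_take_min geq_minl.
Qed.

End FilterIndex.

Lemma head_sorted_leq (l : seq nat) x : sorted leq l -> x \in l -> head 0 l <= x.
Proof.
case: l => //= a l /(order_path_min leq_trans)/allP le_a.
by rewrite inE => /predU1P[->|/le_a].
Qed.

Lemma last_sorted_geq (l : seq nat) x : sorted leq l -> x \in l -> x <= last 0 l.
Proof.
have ge_trans : transitive (fun m n : nat => n <= m).
  by move=> ??? /[swap]; apply: leq_trans.
case/lastP: l => //= l a; rewrite -(rev_sorted (fun m n => n <= m)) rev_rcons /=.
move=> /(order_path_min ge_trans)/allP ge_a.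
rewrite last_rcons mem_rcons inE => /predU1P[-> //|].
by rewrite -mem_rev => /ge_a.
Qed.

Section ConstructionSequences.
Variable T : finType.
Implicit Types (H G : sgraph T) (s t : seq (T + {set T})) (e : {set T}) (v : T).

Definition in_graph G : pred (T + {set T}) := fun z =>
  match z with inl v => v \in gV G | inr e => e \in gE G end.

Lemma mem_elems G z : (z \in elems G) = in_graph G z.
Proof.
rewrite mem_cat; case: z => [v|e] /=.
  rewrite mem_map ?mem_enum; last by move=> ?? [].
  by case: mapP => [[]|]; rewrite ?orbF.
rewrite mem_map ?mem_enum; last by move=> ?? [].
by case: mapP => [[]|].
Qed.

Lemma uniq_elems G : uniq (elems G).
Proof.
rewrite cat_uniq !map_inj_uniq ?enum_uniq //= ?andbT; try by move=> ?? [].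
by apply/hasPn => _ /mapP[e _ ->]; apply/mapP => -[].
Qed.

Lemma sgraphP G :
  reflect (forall e, e \in gE G -> #|e| = 2 /\ e \subset gV G) (is_sgraph G).
Proof.
apply: (iffP forallP) => [sG e eG | sG e]; last first.
  by apply/implyP => /sG[-> ->].
by have /andP[/eqP -> ->] := implyP (sG e) eG.
Qed.

Lemma is_cseqP G s :
  reflect (perm_eq s (elems G) /\
           forall e v, e \in gE G -> v \in e -> index (inl v) s < index (inr e) s)
          (is_cseq G s).
Proof.
apply: (iffP andP) => -[pe ord]; split=> //.
  by move=> e v eG ve; have /forallP/(_ v)/implyP/(_ ve) := implyP (forallP ord e) eG.
by apply/forall_inP => e eG; apply/forall_inP => v ve; rewrite ltnS ord.
Qed.

Lemma edge_vertex G e v : is_sgraph G -> e \in gE G -> v \in e -> v \in gV G.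
Proof. by move=> /sgraphP sG /sG[_ /subsetP]; apply. Qed.

Lemma elems_cseq G : is_sgraph G -> is_cseq G (elems G).
Proof.
move=> sG; apply/is_cseqP; split=> // e v eG ve.
have vV := edge_vertex sG eG ve.
rewrite !index_cat map_f ?mem_enum //; case: mapP => [[]//|_].
by rewrite ltn_addr // index_mem map_f ?mem_enum.
Qed.

Definition edges_seq (E : {set {set T}}) : seq (T + {set T}) := [seq inr e | e <- enum E].

Lemma mem_edges_seq E z : (z \in edges_seq E) = if z is inr e then e \in E else false.
Proof.
case: z => [v|e]; first by case: mapP => [[]|].
by rewrite mem_map ?mem_enum // => ?? [].
Qed.

Lemma costE G s : is_sgraph G ->
    (forall e v, e \in gE G -> v \in e -> index (inl v) s <= index (inr e) s) ->
  cost G s = \sum_(e in gE G) \sum_(v in e) (index (inr e) s - index (inl v) s).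
Proof.
move=> /sgraphP sG le_ve; apply: eq_bigr => e eG; have [card_e _] := sG e eG.
rewrite -card_e -sum_nat_const -sumnB => [|v ve]; last by rewrite ltnS le_ve.
by apply: eq_bigr => v _; rewrite subSS.
Qed.

Lemma cost_sub_edges H G s : gE H \subset gE G -> cost H s <= cost G s.
Proof.
by move=> sE; rewrite /cost [X in _ <= X](big_setID (gE H)) (setIidPr sE) leq_addr.
Qed.

Lemma restrict_cseq H G s : is_sgraph H -> subgraph H G -> is_cseq G s ->
  is_cseq H (filter (in_graph H) s).
Proof.
move=> sH /andP[/subsetP sV /subsetP sE] /is_cseqP[pe lt_ve].
have inG z : in_graph H z -> in_graph G z by case: z => [v /sV|e /sE].
apply/is_cseqP; split=> [|e v eH ve].
  apply: uniq_perm; rewrite ?filter_uniq ?(perm_uniq pe) ?uniq_elems // => z.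
  by rewrite mem_filter (perm_mem pe) !mem_elems (andb_idr (@inG z)).
have vH := edge_vertex sH eH ve.
by apply: index_filter_lt; rewrite ?(perm_mem pe) ?mem_elems ?inG ?lt_ve ?sE.
Qed.

Lemma cost_restrict_le H G s : is_sgraph H -> subgraph H G -> is_cseq G s ->
  cost H (filter (in_graph H) s) <= cost G s.
Proof.
move=> sH /andP[_ sHG] /is_cseqP[_ lt_ve].
have le_ve e v : e \in gE H -> v \in e -> index (inl v) s <= index (inr e) s.
  by move=> eH ve; rewrite ltnW ?lt_ve ?(subsetP sHG).
apply: leq_trans (cost_sub_edges _ sHG); rewrite !costE // => [|e v eH ve].
  by apply: leq_sum => e eH; apply: leq_sum => v ve; apply: index_filter_gap;
    rewrite /= ?le_ve ?(edge_vertex sH eH ve).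
by apply: index_filter_le; rewrite /= ?le_ve ?(edge_vertex sH eH ve).
Qed.

Lemma extend_cseq H G s : is_sgraph G -> subgraph H G -> gV H = gV G ->
  is_cseq H s -> is_cseq G (s ++ edges_seq (gE G :\: gE H)).
Proof.
move=> sG /andP[_ /subsetP sE] eqV /is_cseqP[pe lt_ve].
have mem_s z : (z \in s) = in_graph H z by rewrite (perm_mem pe) mem_elems.
apply/is_cseqP; split=> [|e v eG ve].
  apply: uniq_perm; [|exact: uniq_elems|move=> z].
    rewrite cat_uniq (perm_uniq pe) uniq_elems map_inj_uniq ?enum_uniq //= ?andbT.
      apply/hasPn => z; rewrite mem_edges_seq mem_s.
      by case: z => // e; rewrite inE => /andP[].
    by move=> ?? [].
  rewrite mem_cat mem_s mem_edges_seq mem_elems.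
  case: z => [v|e] /=; first by rewrite orbF eqV.
  by rewrite in_setD; case: (boolP (e \in gE H)) => [/sE ->|].
have vs : inl v \in s by rewrite mem_s /= eqV (edge_vertex sG eG ve).
rewrite !index_cat vs mem_s /=; case: ifP => [eH|_]; first exact: lt_ve.
by rewrite ltn_addr // index_mem.
Qed.

Lemma cost_cat H s t : is_sgraph H -> {subset in_graph H <= s} ->
  cost H (s ++ t) = cost H s.
Proof.
move=> sH sub; apply: eq_bigr => e eH.
rewrite /pos index_cat sub //; congr (_ - _); apply: eq_bigr => v ve.
by rewrite index_cat sub // unfold_in /= (edge_vertex sH eH ve).
Qed.

Lemma cost_extend_ge H G s t : is_sgraph H -> subgraph H G -> is_cseq H s ->
  cost H s <= cost G (s ++ t).
Proof.
move=> sH /andP[_ sHG] /is_cseqP[pe _].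
rewrite -(cost_cat t sH) ?cost_sub_edges // => z.
by rewrite (perm_mem pe) mem_elems.
Qed.

Lemma costsP G n : reflect (exists2 s, is_cseq G s & n = cost G s) (n \in costs G).
Proof.
rewrite mem_sort; apply: (iffP mapP) => -[s cs ->]; exists s => //.
  by move: cs; rewrite mem_filter => /andP[].
by rewrite mem_filter cs mem_permutations; case/andP: cs.
Qed.

Lemma nu_min_le G s : is_cseq G s -> nu_min G <= cost G s.
Proof.
move=> cs; apply: head_sorted_leq; first exact: sort_sorted leq_total _.
by apply/costsP; exists s.
Qed.

Lemma nu_max_ge G s : is_cseq G s -> cost G s <= nu_max G.
Proof.
move=> cs; apply: last_sorted_geq; first exact: sort_sorted leq_total _.
by apply/costsP; exists s.
Qed.

Lemma costs_neq_nil G : is_sgraph G -> costs G != [::].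
Proof.
move=> sG; have : cost G (elems G) \in costs G.
  by apply/costsP; exists (elems G); rewrite ?elems_cseq.
by case: (costs G).
Qed.

Lemma nu_min_cseq G : is_sgraph G -> exists2 s, is_cseq G s & nu_min G = cost G s.
Proof.
move/costs_neq_nil; rewrite /nu_min => ne; apply/costsP.
by case: (costs G) ne => // a l _; apply: mem_head.
Qed.

Lemma nu_max_cseq G : is_sgraph G -> exists2 s, is_cseq G s & nu_max G = cost G s.
Proof.
move/costs_neq_nil; rewrite /nu_max => ne; apply/costsP.
by case: (costs G) ne => // a l _; apply: mem_last.
Qed.

End ConstructionSequences.

Theorem lemma6 (T : finType) (H G : sgraph T) :
  is_sgraph H -> is_sgraph G -> subgraph H G ->
  nu_min H <= nu_min G /\ (gV H = gV G -> nu_max H <= nu_max G).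
Proof.
move=> sH sG sHG; split=> [|eqV].
  have [s cs ->] := nu_min_cseq sG.
  exact: leq_trans (nu_min_le (restrict_cseq sH sHG cs)) (cost_restrict_le sH sHG cs).
have [s cs ->] := nu_max_cseq sH.
exact: leq_trans (cost_extend_ge _ sH sHG cs) (nu_max_ge (extend_cseq sG sHG eqV cs)).
Qed.
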